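(* Let $R$ be a System F type with $\mathrm{FV}(R)=\{X\}$ and $X\in^+ R$, and let $\gamma$ be any environment. Then for all terms $t,t'$: (i) $t\,\llbracket D_{\mathrm{ind}}\subseteq D_{\mathrm{param}}\rrbracket_\gamma\,t'$; (ii) if $R$ is $\forall^+$, then $t\,\llbracket D_{\mathrm{param}}\subseteq D_{\mathrm{ind}}\rrbracket_\gamma\,t'$; (iii) if $R$ is $\forall^+$, then $t\,\llbracket D_{\mathrm{ind}}\simeq D_{\mathrm{param}}\rrbracket_\gamma\,t'$.
   Context: Terms are those of the pure untyped $\lambda$-calculus, $t ::= x \mid \lambda x.t \mid t\,t'$, up to $\alpha$-equivalence; $=_{\beta\eta}$ is $\beta\eta$-convertibility. Relational types: $R ::= X \mid R\to R' \mid \forall X.R \mid R^{\cup} \mid R\cdot R' \mid t$ (the last is promotion of a term to a type); System F types are those built only from type variables, $\to$ and $\forall$. A relation $r$ on terms is $\beta\eta$-closed if $t_1\,r\,t_2$, $t_1'=_{\beta\eta}t_1$, $t_2'=_{\beta\eta}t_2$ imply $t_1'\,r\,t_2'$; $\mathcal{R}$ is the set of such relations. An environment $\gamma$ maps type variables to $\mathcal{R}$. Interpretation: $\llbracket X\rrbracket_\gamma=\gamma(X)$; $t\,\llbracket R\to R'\rrbracket_\gamma\,t'$ iff $a\,\llbracket R\rrbracket_\gamma\,a'$ implies $t\,a\,\llbracket R'\rrbracket_\gamma\,t'\,a'$ for all $a,a'$; $\llbracket \forall X.R\rrbracket_\gamma=\bigcap_{r\in\mathcal{R}}\llbracket R\rrbracket_{\gamma[X\mapsto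 r]}$; $t\,\llbracket R^\cup\rrbracket_\gamma\,t'$ iff $t'\,\llbracket R\rrbracket_\gamma\,t$; $t\,\llbracket R\cdot R'\rrbracket_\gamma\,t'$ iff $\exists t''$, $t\,\llbracket R\rrbracket_\gamma\,t''$ and $t''\,\llbracket R'\rrbracket_\gamma\,t'$; $\llbracket \hat t\rrbracket_\gamma=\{(t,t')\mid \hat t\,t=_{\beta\eta}t'\}$. Term abbreviations: $I:=\lambda x.x$, $K:=\lambda x.\lambda y.x$, $t\circ t':=\lambda x.t\,(t'\,x)$. Type abbreviations: $[t]R:=(K\,t)\cdot R$; $R[t]:=R\cdot (K\,t)^\cup$; $t\bullet R := t\cdot R\cdot t^\cup$; $R\subseteq R' := (K\,I)\bullet(R\to R')$; $R\Rightarrow R' := K\bullet (R\to R')$; $R\simeq R' := (R\subseteq R')\cdot(R'\subseteq R)$. Polarities $p\in\{+,-\}$, $\bar p$ the other. $X\in^p R$ is defined by: $X\in^+X$; $X\in^p Y$ for type variables $Y\neq X$; $X\in^p(R\to R')$ iff $X\in^{\bar p}R$ and $X\in^p R'$; $X\in^p\forall Y.R$ iff $X\in^p R$; $X\in^p (R\cdot R')$ iff $X\in^pR$ and $X\in^pR'$; $X\in^p R^\cup$ iff $X\in^p R$; $X\in^p t$ for promoted terms. The property $\forall^p$: type variables are $\forall^p$; if $R$ is $\forall^{\bar p}$ and $R'$ is $\forall^p$ then $R\to R'$ is $\forall^p$; if $R$ is $\forall^+$ then $\forall X.R$ is $\forall^+$; if $R$ is $\forall^p$ so is $R^\cup$;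 a promotion of $t=_{\beta\eta}I$ is $\forall^p$. For System F types define $\mathit{fmap}_{X,R}$ by recursion: $\mathit{fmap}_{X,X}=I$; $\mathit{fmap}_{X,Y}=K\,I$ ($Y\ne X$); $\mathit{fmap}_{X,R\to R'}=\lambda f.\lambda a.\,\mathit{fmap}_{X,R'}\,f\circ a\circ \mathit{fmap}_{X,R}\,f$; $\mathit{fmap}_{X,\forall Y.R}=\lambda f.\,\mathit{fmap}_{X,R}\,f$ (bound variable renamed to differ from $X$). Let $\mathit{fold}:=\lambda a.\lambda x.x\,a$ and $\mathit{in}_{X,R}:=\lambda x.\lambda a.\,a\,(\mathit{fmap}_{X,R}\,(\mathit{fold}\,a)\,x)$. Define $D_{\mathrm{param}}:=\forall X.(R\to X)\to X$ and $D_{\mathrm{ind}}:=\forall X.\big([\mathit{in}_{X,R}]\,(R\to X)\,[\mathit{in}_{X,R}]\big)\Rightarrow X$. *)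

From Stdlib Require Import Arith Relations.

Inductive term : Type :=
| Var : nat -> term
| Lam : term -> term
| App : term -> term -> term.

Fixpoint lift_at (c : nat) (t : term) : term :=
  match t with
  | Var n => if Nat.ltb n c then Var n else Var (S n)
  | Lam b => Lam (lift_at (S c) b)
  | App u v => App (lift_at c u) (lift_at c v)
  end.

Definition lift (t : term) : term := lift_at 0 t.

Fixpoint liftn (k : nat) (t : term) : term :=
  match k with 0 => t | S k' => lift (liftn k' t) end.

Fixpoint subst_at (k : nat) (s : term) (t : term) : term :=
  match t with
  | Var n => if Nat.ltb n k then Var n
             else if Nat.eqb n k then liftn k s else Var (pred n)
  | Lam b => Lam (subst_at (S k) s b)
  | App u v => App (subst_at k s u) (subst_at k s v)
  end.

Inductive step : term -> term -> Prop :=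
| step_beta : forall b a, step (App (Lam b) a) (subst_at 0 a b)
| step_eta : forall t, step (Lam (App (lift t) (Var 0))) t
| step_lam : forall b b', step b b' -> step (Lam b) (Lam b')
| step_appl : forall u u' v, step u u' -> step (App u v) (App u' v)
| step_appr : forall u v v', step v v' -> step (App u v) (App u v').

Definition conv : term -> term -> Prop := clos_refl_sym_trans term step.

Definition I : term := Lam (Var 0).
Definition K : term := Lam (Lam (Var 1)).
(* t o t' := \x. t (t' x) *)
Definition comp (t t' : term) : term := Lam (App (lift t) (App (lift t') (Var 0))).
(* fold := \a.\x. x a *)
Definition fold : term := Lam (Lam (App (Var 0) (Var 1))).

Inductive rty : Type :=
| TVar : nat -> rty
| Arr : rty -> rty -> rty
| All : rty -> rty
| Conv : rty -> rty
| Comp : rty -> rty -> rty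
| Prom : term -> rty.

Fixpoint isF (R : rty) : Prop :=
  match R with
  | TVar _ => True
  | Arr A B => isF A /\ isF B
  | All A => isF A
  | _ => False
  end.

Fixpoint occurs (k : nat) (R : rty) : Prop :=
  match R with
  | TVar n => n = k
  | Arr A B => occurs k A \/ occurs k B
  | All A => occurs (S k) A
  | Conv A => occurs k A
  | Comp A B => occurs k A \/ occurs k B
  | Prom _ => False
  end.

(* FV(R) = {X}, where X is the variable with index 0 *)
Definition FV_is_X (R : rty) : Prop :=
  occurs 0 R /\ forall n, n <> 0 -> ~ occurs n R.

(* polarity: occ k p R  means  X_k \in^p R ; p = true is +, false is - *)
Fixpoint occ (k : nat) (p : bool) (R : rty) : Prop :=
  match R with
  | TVar n => if Nat.eqb n k then p = true else True
  | Arr A B => occ k (negb p) A /\ occ k p B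
  | All A => occ (S k) p A
  | Comp A B => occ k p A /\ occ k p B
  | Conv A => occ k p A
  | Prom _ => True
  end.

Inductive forallp : bool -> rty -> Prop :=
| fa_var : forall p n, forallp p (TVar n)
| fa_arr : forall p A B, forallp (negb p) A -> forallp p B -> forallp p (Arr A B)
| fa_all : forall A, forallp true A -> forallp true (All A)
| fa_conv : forall p A, forallp p A -> forallp p (Conv A)
| fa_prom : forall p t, conv t I -> forallp p (Prom t).

Definition rel := term -> term -> Prop.

Definition bclosed (r : rel) : Prop :=
  forall t1 t2 t1' t2', r t1 t2 -> conv t1' t1 -> conv t2' t2 -> r t1' t2'.

Definition env := nat -> rel.

Definition env_ok (g : env) : Prop := forall n, bclosed (g n).

Definition scons (r : rel) (g : env) : env :=
  fun n => match n with 0 => r | S m => g m end.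

Fixpoint interp (g : env) (R : rty) : rel :=
  match R with
  | TVar n => g n
  | Arr A B => fun t t' => forall a a', interp g A a a' -> interp g B (App t a) (App t' a')
  | All A => fun t t' => forall r : rel, bclosed r -> interp (scons r g) A t t'
  | Conv A => fun t t' => interp g A t' t
  | Comp A B => fun t t' => exists t'', interp g A t t'' /\ interp g B t'' t'
  | Prom s => fun t t' => conv (App s t) t'
  end.

Definition brL (t : term) (R : rty) : rty := Comp (Prom (App K t)) R.
Definition brR (R : rty) (t : term) : rty := Comp R (Conv (Prom (App K t))).
Definition bullet (t : term) (R : rty) : rty := Comp (Comp (Prom t) R) (Conv (Prom t)).
Definition tsub (A B : rty) : rty := bullet (App K I) (Arr A B).
Definition timp (A B : rty) : rty := bullet K (Arr A B).
Definition tequiv (A B : rty) : rty := Comp (tsub A B) (tsub B A).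

Fixpoint fmap (k : nat) (R : rty) : term :=
  match R with
  | TVar j => if Nat.eqb j k then I else App K I
  | Arr A B =>
      (* \f.\a. fmap B f o a o fmap A f *)
      Lam (Lam (comp (App (liftn 2 (fmap k B)) (Var 1))
                     (comp (Var 0) (App (liftn 2 (fmap k A)) (Var 1)))))
  | All A => Lam (App (lift (fmap (S k) A)) (Var 0))
  | _ => I (* not used: only System F types *)
  end.

(* in_{X,R} := \x.\a. a (fmap_{X,R} (fold a) x), X = index 0 *)
Definition inXR (R : rty) : term :=
  Lam (Lam (App (Var 0) (App (App (liftn 2 (fmap 0 R)) (App fold (Var 0))) (Var 1)))).

(* R is the body with X = index 0 free; the forall X binds it *)
Definition Dparam (R : rty) : rty := All (Arr (Arr R (TVar 0)) (TVar 0)).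
Definition Dind (R : rty) : rty :=
  All (timp (brR (brL (inXR R) (Arr R (TVar 0))) (inXR R)) (TVar 0)).

From Stdlib Require Import Arith Lia Relations Morphisms.

(** (i) Let [a], [a'] be related by [D_ind] and let [f], [f'] be
    related by [R -> X] at [r]. Instantiate [X] with
    [s := {(d, d') | r (d f) (d' f')}]: since [in x f = f (fmap (fold f) x)] and,
    by functoriality, [fmap (fold f)] maps [R] at [s] into [R] at [r], [in] is
    related to itself by [R -> X] at [s]; hence [s a a'], i.e. [r (a f) (a' f')].
    (ii) Let [a], [a'] be related by [D_param]. Instantiating [X] with
    convertibility gives [a = a'] by identity extension (this is where [forall^+]
    is used); instantiating [X] with the graph of [fold w] gives [a in w = a w] by
    the graph lemma, so [a in = a] by extensionality. Parametricity at an
    arbitrary [r] for which [in] is an algebra then yields [r (a in) (a' in)],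
    that is [r a a']. (iii) composes (i) and (ii). *)

(** * Convertibility as a congruence *)

#[local] Instance conv_Equivalence : Equivalence conv.
Proof. split; [exact (rst_refl _ _) | exact (rst_sym _ _) | exact (rst_trans _ _)]. Qed.

Lemma conv_congr (f : term -> term) :
  (forall t t', step t t' -> step (f t) (f t')) ->
  forall t t', conv t t' -> conv (f t) (f t').
Proof.
  intros Hf t t' H; induction H as [t t' H| | |].
  - apply rst_step, Hf, H.
  - reflexivity.
  - symmetry; assumption.
  - etransitivity; eassumption.
Qed.

#[local] Instance App_conv : Proper (conv ==> conv ==> conv) App.
Proof.
  intros u u' Hu v v' Hv; transitivity (App u' v).
  - exact (conv_congr (fun u => App u v) (fun _ _ => step_appl _ _ _) _ _ Hu).
  - exact (conv_congr (App u') (step_appr _) _ _ Hv).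
Qed.

#[local] Instance Lam_conv : Proper (conv ==> conv) Lam.
Proof. exact (conv_congr Lam step_lam). Qed.

(** * Renaming and extensionality *)

Definition up (r : nat -> nat) (n : nat) : nat :=
  match n with 0 => 0 | S m => S (r m) end.

Fixpoint rename (r : nat -> nat) (t : term) : term :=
  match t with
  | Var n => Var (r n)
  | Lam b => Lam (rename (up r) b)
  | App u v => App (rename r u) (rename r v)
  end.

Lemma rename_ext t : forall r1 r2, (forall n, r1 n = r2 n) -> rename r1 t = rename r2 t.
Proof.
  induction t; intros r1 r2 Hr; simpl; f_equal; auto.
  apply IHt; intros [|n]; simpl; auto.
Qed.

Lemma rename_rename t : forall r1 r2, rename r1 (rename r2 t) = rename (fun n => r1 (r2 n)) t.
Proof.
  induction t; intros r1 r2; simpl; f_equal; auto.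
  rewrite IHt; apply rename_ext; intros [|n]; reflexivity.
Qed.

Lemma rename_id t : rename (fun n => n) t = t.
Proof.
  induction t; simpl; f_equal; auto.
  rewrite <- IHt at 2; apply rename_ext; intros [|n]; reflexivity.
Qed.

Definition shift (c n : nat) : nat := if n <? c then n else S n.

Lemma up_shift c n : up (shift c) n = shift (S c) n.
Proof.
  destruct n as [|n]; [reflexivity|]; unfold shift; simpl.
  destruct (Nat.ltb_spec n c), (Nat.ltb_spec (S n) (S c)); lia.
Qed.

Lemma lift_at_rename t : forall c, lift_at c t = rename (shift c) t.
Proof.
  induction t as [n|b IHb|u IHu v IHv]; intros c; simpl.
  - unfold shift; destruct (n <? c); reflexivity.
  - rewrite IHb; f_equal; apply rename_ext; intros n; symmetry; apply up_shift.
  - f_equal; auto.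
Qed.

Lemma liftn_rename k t : liftn k t = rename (Nat.add k) t.
Proof.
  induction k; simpl.
  - symmetry; apply rename_id.
  - unfold lift; rewrite IHk, lift_at_rename, rename_rename; reflexivity.
Qed.

Lemma rename_lift r t : rename (up r) (lift t) = lift (rename r t).
Proof. unfold lift; rewrite !lift_at_rename, !rename_rename; reflexivity. Qed.

Definition upn (k : nat) (r : nat -> nat) (n : nat) : nat :=
  if n <? k then n else k + r (n - k).

Lemma up_upn k r n : up (upn k r) n = upn (S k) r n.
Proof.
  destruct n as [|n]; unfold upn; simpl; [reflexivity|].
  destruct (Nat.ltb_spec n k), (Nat.ltb_spec (S n) (S k)); try lia; reflexivity.
Qed.

Lemma rename_subst_at t : forall k r s,
  rename (upn k r) (subst_at k s t) = subst_at k (rename r s) (rename (upn (S k) r) t).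
Proof.
  induction t as [n|b IHb|u IHu v IHv]; intros k r s; simpl.
  - unfold upn.
    repeat (cbn -[Nat.ltb Nat.eqb]; match goal with
    | |- context [?a <? ?b] => destruct (Nat.ltb_spec a b)
    | |- context [?a =? ?b] => destruct (Nat.eqb_spec a b)
    end); try lia.
    + reflexivity.
    + rewrite !liftn_rename, !rename_rename; apply rename_ext; intros m.
      destruct (Nat.ltb_spec (k + m) k); [lia|].
      replace (k + m - k) with m by lia; reflexivity.
    + replace (pred n - k) with (n - S k) by lia; reflexivity.
  - f_equal; rewrite (rename_ext _ _ _ (up_upn k r)), IHb.
    f_equal; apply rename_ext; intros n; symmetry; apply up_upn.
  - f_equal; auto.
Qed.

Lemma step_rename t t' : step t t' -> forall r, step (rename r t) (rename r t').
Proof.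
  induction 1 as [b a|t| | |]; intros r; simpl; try (constructor; auto; fail).
  - rewrite (rename_ext (subst_at 0 a b) r (upn 0 r)), rename_subst_at,
      (rename_ext b (upn 1 r) (up r)).
    + constructor.
    + intros [|n]; unfold upn; simpl; rewrite ?Nat.sub_0_r; reflexivity.
    + intros n; unfold upn; simpl; rewrite Nat.sub_0_r; reflexivity.
  - rewrite rename_lift; constructor.
Qed.

Lemma conv_rename r t t' : conv t t' -> conv (rename r t) (rename r t').
Proof. apply conv_congr; intros; apply step_rename; assumption. Qed.

Fixpoint scoped (n : nat) (t : term) : Prop :=
  match t with
  | Var m => m < n
  | Lam b => scoped (S n) b
  | App u v => scoped n u /\ scoped n v
  end.

Lemma scoped_mono t : forall n m, scoped n t -> n <= m -> scoped m t.
Proof.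
  induction t as [k|b IHb|u IHu v IHv]; simpl; intros n m H Hle.
  - lia.
  - apply (IHb (S n)); auto with arith.
  - destruct H; split; eauto.
Qed.

Lemma scoped_exists t : exists n, scoped n t.
Proof.
  induction t as [m|b [n Hn]|u [n Hn] v [m Hm]]; simpl.
  - exists (S m); lia.
  - exists n; eapply scoped_mono; eauto.
  - exists (max n m); split; eapply scoped_mono; eauto; lia.
Qed.

Lemma rename_scoped t : forall n r1 r2, scoped n t ->
  (forall m, m < n -> r1 m = r2 m) -> rename r1 t = rename r2 t.
Proof.
  induction t as [m|b IHb|u IHu v IHv]; simpl; intros n r1 r2 Ht Hr.
  - f_equal; auto.
  - f_equal; apply (IHb (S n)); auto.
    intros [|m] Hm; simpl; auto with arith.
  - destruct Ht; f_equal; eauto.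
Qed.

Lemma conv_ext u u' : (forall a, conv (App u a) (App u' a)) -> conv u u'.
Proof.
  intros H.
  destruct (scoped_exists (App u u')) as [N [Hu Hu']].
  set (r := fun n => if n =? N then 0 else S n).
  assert (Hlift : forall v, scoped N v -> rename r v = lift v).
  { intros v Hv; unfold lift; rewrite lift_at_rename.
    apply (rename_scoped _ N); auto.
    intros m Hm; unfold r, shift; destruct (Nat.eqb_spec m N); [lia|reflexivity]. }
  (* [r] sends the fresh variable [N] to [0] and shifts the others, so the
     hypothesis at [Var N] becomes [lift u 0 = lift u' 0]; eta concludes. *)
  pose proof (conv_rename r _ _ (H (Var N))) as HN; simpl in HN.
  unfold r at 2 4 in HN; rewrite Nat.eqb_refl, !Hlift in HN by assumption.
  transitivity (Lam (App (lift u) (Var 0))); [symmetry; apply rst_step, step_eta|].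
  rewrite HN; apply rst_step, step_eta.
Qed.

(** * Closed terms and beta rules *)

Lemma rename_closed r t : scoped 0 t -> rename r t = t.
Proof.
  intros Ht; transitivity (rename (fun n => n) t); [|apply rename_id].
  apply (rename_scoped _ 0); [assumption|lia].
Qed.

Lemma subst_at_scoped t : forall n k s, scoped n t -> n <= k -> subst_at k s t = t.
Proof.
  induction t as [m|b IHb|u IHu v IHv]; simpl; intros n k s Ht Hk.
  - destruct (Nat.ltb_spec m k); [reflexivity|lia].
  - f_equal; apply (IHb (S n)); auto with arith.
  - destruct Ht; f_equal; eauto.
Qed.

Lemma scoped_lift_at t : forall n c, scoped n t -> scoped (S n) (lift_at c t).
Proof.
  induction t as [m|b IHb|u IHu v IHv]; simpl; intros n c Ht.
  - destruct (m <? c); simpl; lia.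
  - auto.
  - destruct Ht; split; auto.
Qed.

Lemma fmap_closed R : forall k, scoped 0 (fmap k R).
Proof.
  induction R as [n|A IHA B IHB|A IHA| | |]; intros k; simpl; auto.
  - destruct (n =? k); simpl; lia.
  - unfold lift; repeat split; try lia;
      repeat apply scoped_lift_at; eapply scoped_mono; eauto with arith.
  - split; [apply scoped_lift_at|]; auto.
Qed.

Lemma lift_at_fmap c k R : lift_at c (fmap k R) = fmap k R.
Proof. rewrite lift_at_rename; apply rename_closed, fmap_closed. Qed.

Lemma liftn_fmap n k R : liftn n (fmap k R) = fmap k R.
Proof. rewrite liftn_rename; apply rename_closed, fmap_closed. Qed.

Lemma subst_at_fmap j s k R : subst_at j s (fmap k R) = fmap k R.
Proof. apply (subst_at_scoped _ 0); [apply fmap_closed|lia]. Qed.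

Lemma subst_at_lift_at t : forall k s, subst_at k s (lift_at k t) = t.
Proof.
  induction t as [n|b IHb|u IHu v IHv]; intros k s; simpl; f_equal; auto.
  destruct (Nat.ltb_spec n k); cbn -[Nat.ltb Nat.eqb].
  - destruct (Nat.ltb_spec n k); [reflexivity|lia].
  - destruct (Nat.ltb_spec (S n) k), (Nat.eqb_spec (S n) k); [lia..|reflexivity].
Qed.

Lemma subst_at_liftn k s t : subst_at k s (liftn (S k) t) = liftn k t.
Proof.
  rewrite <- (subst_at_lift_at (liftn k t) k s); f_equal.
  rewrite !liftn_rename, lift_at_rename, rename_rename.
  apply rename_ext; intros n; unfold shift.
  destruct (Nat.ltb_spec (k + n) k); lia.
Qed.

Lemma beta b a : conv (App (Lam b) a) (subst_at 0 a b).
Proof. apply rst_step, step_beta. Qed.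

Lemma liftn_O t : liftn 0 t = t.
Proof. reflexivity. Qed.

Ltac beta_normalize :=
  repeat (rewrite beta; cbn [subst_at lift_at lift Nat.ltb Nat.leb Nat.eqb pred];
          rewrite ?subst_at_fmap, ?lift_at_fmap, ?subst_at_liftn, ?liftn_O).

Lemma beta_I a : conv (App I a) a.
Proof. unfold I; beta_normalize; reflexivity. Qed.

Lemma beta_K a b : conv (App (App K a) b) a.
Proof. unfold K; beta_normalize; reflexivity. Qed.

Lemma beta_KI t a : conv (App (App (App K I) t) a) a.
Proof. rewrite beta_K; apply beta_I. Qed.

Lemma beta_fold f d : conv (App (App fold f) d) (App d f).
Proof. unfold fold; beta_normalize; reflexivity. Qed.

Lemma beta_fmap_arr k A B h x y :
  conv (App (App (App (fmap k (Arr A B)) h) x) y)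
       (App (App (fmap k B) h) (App x (App (App (fmap k A) h) y))).
Proof. cbn [fmap]; rewrite !liftn_fmap; unfold comp; beta_normalize; reflexivity. Qed.

Lemma beta_fmap_var k h x : conv (App (App (fmap k (TVar k)) h) x) (App h x).
Proof. cbn [fmap]; rewrite Nat.eqb_refl; unfold I; beta_normalize; reflexivity. Qed.

Lemma beta_fmap_var_neq n k h x : n <> k -> conv (App (App (fmap k (TVar n)) h) x) x.
Proof.
  intros Hn; cbn [fmap]; rewrite (proj2 (Nat.eqb_neq n k) Hn).
  unfold K, I; beta_normalize; reflexivity.
Qed.

Lemma beta_fmap_all k A h x :
  conv (App (App (fmap k (All A)) h) x) (App (App (fmap (S k) A) h) x).
Proof. cbn [fmap]; beta_normalize; reflexivity. Qed.

Lemma beta_inXR R x f :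
  conv (App (App (inXR R) x) f) (App f (App (App (fmap 0 R) (App fold f)) x)).
Proof. unfold inXR; rewrite liftn_fmap; beta_normalize; reflexivity. Qed.

(** * The relational interpretation *)

Lemma bclosed_Proper r : bclosed r -> Proper (conv ==> conv ==> iff) r.
Proof.
  intros Hr t1 t1' H1 t2 t2' H2; split; intros H; eapply Hr; eauto; symmetry; assumption.
Qed.

Lemma bclosed_conv : bclosed conv.
Proof. intros t1 t2 t1' t2' H H1 H2; rewrite H1, H2; assumption. Qed.

Lemma env_ok_scons r g : bclosed r -> env_ok g -> env_ok (scons r g).
Proof. intros Hr Hg [|n]; simpl; auto. Qed.

Lemma interp_bclosed R : forall g, env_ok g -> bclosed (interp g R).
Proof.
  induction R as [n|A IHA B IHB|A IHA|A IHA|A IHA B IHB|s]; simpl;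
    intros g Hg t1 t2 t1' t2' H H1 H2.
  - eapply Hg; eauto.
  - intros a a' Ha; eapply IHB; [eauto|apply H, Ha|rewrite H1|rewrite H2]; reflexivity.
  - intros r Hr; eapply IHA; [apply env_ok_scons|apply H|..]; eauto.
  - eapply IHA; eauto.
  - destruct H as [u [Hu1 Hu2]]; exists u; split;
      [eapply IHA|eapply IHB]; try eassumption; reflexivity.
  - rewrite H1, H2; assumption.
Qed.

Lemma interp_conv g R t1 t2 t1' t2' : env_ok g ->
  conv t1 t1' -> conv t2 t2' -> interp g R t1 t2 -> interp g R t1' t2'.
Proof. intros Hg H1 H2 H; eapply interp_bclosed; eauto; symmetry; assumption. Qed.

Lemma interp_Proper g R : env_ok g -> Proper (conv ==> conv ==> iff) (interp g R).
Proof. intros Hg; apply bclosed_Proper, interp_bclosed, Hg. Qed.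

Lemma tsub_intro g A B : env_ok g ->
  (forall a a', interp g A a a' -> interp g B a a') ->
  forall t t', interp g (tsub A B) t t'.
Proof.
  intros Hg HAB t t'; simpl.
  exists (App (App K I) t'); split; [|reflexivity].
  exists (App (App K I) t); split; [reflexivity|].
  intros a a' Ha; pose proof (interp_Proper g B Hg).
  rewrite !beta_KI; apply HAB, Ha.
Qed.

Lemma interp_Dind g R a a' : env_ok g ->
  interp g (Dind R) a a' <->
  (forall r, bclosed r -> interp (scons r g) (Arr R (TVar 0)) (inXR R) (inXR R) -> r a a').
Proof.
  intros Hg; split.
  - intros H r Hr Hin; pose proof (bclosed_Proper r Hr).
    destruct (H r Hr) as [u [[v [Hv Hvu]] Hu]].
    rewrite <- (beta_K a I), <- (beta_K a' I), Hv, Hu; apply Hvu.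
    exists (App (App K (inXR R)) I); split; [|reflexivity].
    exists (App (App K (inXR R)) I); split; [reflexivity|].
    refine (interp_conv _ (Arr R (TVar 0)) _ _ _ _ _ _ _ Hin);
      [apply env_ok_scons; assumption|symmetry; apply beta_K..].
  - intros H r Hr; pose proof (bclosed_Proper r Hr).
    exists (App K a'); split; [|simpl; reflexivity].
    exists (App K a); split; [simpl; reflexivity|].
    intros f f' [w [[w2 [Hw2 Hin]] Hw]]; simpl in Hw2, Hw |- *.
    rewrite !beta_K; apply H; [assumption|].
    refine (interp_conv _ (Arr R (TVar 0)) _ _ _ _ _ _ _ Hin);
      [apply env_ok_scons; assumption|rewrite <- Hw2|rewrite <- Hw]; apply beta_K.
Qed.

(** * Identity extension, functoriality of fmap and the graph lemma *)

Lemma forallp_Arr_inv p A B : forallp p (Arr A B) -> forallp (negb p) A /\ forallp p B.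
Proof. inversion 1; auto. Qed.

Lemma forallp_All_inv p A : forallp p (All A) -> p = true /\ forallp true A.
Proof. inversion 1; auto. Qed.

Lemma fmap_I R : isF R -> forall k x, conv (App (App (fmap k R) I) x) x.
Proof.
  induction R as [n|A IHA B IHB|A IHA| | |]; cbn [isF]; intros HF k x; try contradiction.
  - destruct (Nat.eq_dec n k) as [->|Hn].
    + rewrite beta_fmap_var; apply beta_I.
    + apply beta_fmap_var_neq, Hn.
  - destruct HF as [HA HB]; apply conv_ext; intros y.
    rewrite beta_fmap_arr, IHB, IHA by assumption; reflexivity.
  - rewrite beta_fmap_all; apply IHA, HF.
Qed.

Lemma fmap_interp R : isF R -> forall k g1 g2 h h', env_ok g1 -> env_ok g2 ->
  (forall n, n <> k -> g1 n = g2 n) ->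
  (forall d d', g1 k d d' -> g2 k (App h d) (App h' d')) ->
  (occ k true R -> forall x x', interp g1 R x x' ->
     interp g2 R (App (App (fmap k R) h) x) (App (App (fmap k R) h') x')) /\
  (occ k false R -> forall x x', interp g2 R x x' ->
     interp g1 R (App (App (fmap k R) h) x) (App (App (fmap k R) h') x')).
Proof.
  induction R as [n|A IHA B IHB|A IHA| | |]; cbn [isF occ negb];
    intros HF k g1 g2 h h' Hg1 Hg2 Hagree Hh; try contradiction.
  - pose proof (interp_Proper g1 (TVar n) Hg1); pose proof (interp_Proper g2 (TVar n) Hg2).
    destruct (Nat.eqb_spec n k) as [->|Hn]; split; intros Ho x x' Hx; try discriminate.
    + rewrite !beta_fmap_var; apply Hh, Hx.
    + rewrite !beta_fmap_var_neq by exact Hn; simpl; rewrite <- Hagree; assumption.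
    + rewrite !beta_fmap_var_neq by exact Hn; simpl; rewrite Hagree; assumption.
  - destruct HF as [HA HB].
    destruct (IHA HA k g1 g2 h h' Hg1 Hg2 Hagree Hh) as [A1 A2].
    destruct (IHB HB k g1 g2 h h' Hg1 Hg2 Hagree Hh) as [B1 B2].
    pose proof (interp_Proper g1 B Hg1); pose proof (interp_Proper g2 B Hg2).
    split; intros [OA OB] x x' Hx; cbn [interp]; intros y y' Hy; rewrite !beta_fmap_arr.
    + apply B1, Hx, A2; assumption.
    + apply B2, Hx, A1; assumption.
  - split; intros Ho x x' Hx; cbn [interp]; intros q Hq.
    all: pose proof (env_ok_scons q g1 Hq Hg1) as Hq1.
    all: pose proof (env_ok_scons q g2 Hq Hg2) as Hq2.
    all: destruct (IHA HF (S k) _ _ h h' Hq1 Hq2) as [I1 I2];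
           [intros [|n] Hn; simpl; auto with arith|exact Hh|].
    + pose proof (interp_Proper _ A Hq2); rewrite !beta_fmap_all.
      apply I1; [assumption|apply Hx, Hq].
    + pose proof (interp_Proper _ A Hq1); rewrite !beta_fmap_all.
      apply I2; [assumption|apply Hx, Hq].
Qed.

Lemma identity_extension R : isF R -> forall g,
  (forall n, occurs n R -> forall a b, g n a b <-> conv a b) ->
  (forallp true R -> forall x x', interp g R x x' -> conv x x') /\
  (forallp false R -> forall x x', conv x x' -> interp g R x x').
Proof.
  induction R as [n|A IHA B IHB|A IHA| | |]; cbn [isF occurs];
    intros HF g Hg; try contradiction.
  - split; intros _ x x'; apply Hg; reflexivity.
  - destruct HF as [HA HB].
    destruct (IHA HA g (fun n o => Hg n (or_introl o))) as [A1 A2].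
    destruct (IHB HB g (fun n o => Hg n (or_intror o))) as [B1 B2].
    split; intros Hf x x' Hx; apply forallp_Arr_inv in Hf as [FA FB].
    + apply conv_ext; intros w; apply B1, Hx, A2; auto; reflexivity.
    + cbn [interp]; intros y y' Hy; apply B2; auto.
      rewrite Hx, (A1 FA y y' Hy); reflexivity.
  - split; intros Hf; apply forallp_All_inv in Hf as [Hp FA]; [|discriminate].
    intros x x' Hx; apply (IHA HF (scons conv g)).
    + intros [|n] Hn a b; simpl; [reflexivity|apply Hg, Hn].
    + assumption.
    + apply Hx, bclosed_conv.
Qed.

Definition graph (h : term) : rel := fun d d' => conv (App h d) d'.

Lemma bclosed_graph h : bclosed (graph h).
Proof. intros t1 t2 t1' t2' H H1 H2; unfold graph; rewrite H1, H2; exact H. Qed.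

Lemma scons_conv_FV R g : (forall n, n <> 0 -> ~ occurs n R) ->
  forall n, occurs n R -> forall a b, scons conv g n a b <-> conv a b.
Proof. intros Hfv [|n] Hn a b; [reflexivity|]. exfalso; apply (Hfv (S n)); auto. Qed.

Lemma interp_graph R g h : isF R -> (forall n, n <> 0 -> ~ occurs n R) ->
  occ 0 true R -> forallp true R -> env_ok g ->
  forall x x', interp (scons (graph h) g) R x x' -> conv (App (App (fmap 0 R) h) x) x'.
Proof.
  intros HF Hfv Ho Hfa Hg x x' Hx.
  rewrite <- (fmap_I R HF 0 x').
  apply (identity_extension R HF (scons conv g) (scons_conv_FV R g Hfv)); [assumption|].
  apply (fmap_interp R HF 0 (scons (graph h) g) (scons conv g) h I);
    auto using env_ok_scons, bclosed_graph, bclosed_conv.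
  - intros [|n] Hn; [contradiction|reflexivity].
  - intros d d' Hd; simpl; rewrite beta_I; exact Hd.
Qed.

Lemma Dind_sub_Dparam R g : isF R -> occ 0 true R -> env_ok g ->
  forall a a', interp g (Dind R) a a' -> interp g (Dparam R) a a'.
Proof.
  intros HF Ho Hg a a' Hind; unfold Dparam; cbn [interp scons].
  intros r Hr f f' Hf; pose proof (bclosed_Proper r Hr).
  set (s := fun d d' => r (App d f) (App d' f')).
  assert (Hs : bclosed s).
  { intros d1 d2 d1' d2' Hd H1 H2; unfold s; rewrite H1, H2; exact Hd. }
  apply (proj1 (interp_Dind g R a a' Hg) Hind s Hs); cbn [interp scons].
  intros x x' Hx; unfold s; rewrite !beta_inXR; apply Hf.
  apply (fmap_interp R HF 0 (scons s g) (scons r g)); auto using env_ok_scons.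
  - intros [|n] Hn; [contradiction|reflexivity].
  - intros d d' Hd; simpl; rewrite !beta_fold; exact Hd.
Qed.

Lemma Dparam_sub_Dind R g : isF R -> (forall n, n <> 0 -> ~ occurs n R) ->
  occ 0 true R -> forallp true R -> env_ok g ->
  forall a a', interp g (Dparam R) a a' -> interp g (Dind R) a a'.
Proof.
  intros HF Hfv Ho Hfa Hg a a' Hp.
  assert (Haa' : conv a a').
  { apply conv_ext; intros w; apply (Hp conv bclosed_conv w w).
    intros x x' Hx; apply App_conv; [reflexivity|].
    exact (proj1 (identity_extension R HF _ (scons_conv_FV R g Hfv)) Hfa x x' Hx). }
  assert (Ha_in : conv (App a (inXR R)) a).
  { apply conv_ext; intros w.
    transitivity (App (App fold w) (App a (inXR R))); [symmetry; apply beta_fold|].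
    transitivity (App a' w); [|rewrite Haa'; reflexivity].
    apply (Hp (graph (App fold w)) (bclosed_graph _) (inXR R) w).
    intros x x' Hx; cbn [scons]; unfold graph; rewrite beta_fold, beta_inXR.
    apply App_conv; [reflexivity|].
    exact (interp_graph R g _ HF Hfv Ho Hfa Hg x x' Hx). }
  assert (Ha'_in : conv (App a' (inXR R)) a') by (rewrite <- Haa'; exact Ha_in).
  apply interp_Dind; [assumption|]; intros r Hr Hin.
  pose proof (bclosed_Proper r Hr).
  rewrite <- Ha_in, <- Ha'_in; exact (Hp r Hr _ _ Hin).
Qed.

Theorem mainTheorem2 (R : rty) (g : env) :
  isF R -> FV_is_X R -> occ 0 true R -> env_ok g ->
  (forall t t', interp g (tsub (Dind R) (Dparam R)) t t') /\
  (forallp true R -> forall t t', interp g (tsub (Dparam R) (Dind R)) t t') /\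
  (forallp true R -> forall t t', interp g (tequiv (Dind R) (Dparam R)) t t').
Proof.
  intros HF [_ Hfv] Ho Hg.
  assert (Hind : forall t t', interp g (tsub (Dind R) (Dparam R)) t t')
    by (apply tsub_intro, Dind_sub_Dparam; assumption).
  assert (Hpar : forallp true R -> forall t t', interp g (tsub (Dparam R) (Dind R)) t t')
    by (intros; apply tsub_intro, Dparam_sub_Dind; assumption).
  split; [exact Hind|split; [exact Hpar|]].
  intros Hfa t t'; exists t; split; [apply Hind|apply Hpar, Hfa].
Qed.
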